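(* Let $K$ be a field and $s\in K$ with $s\ne0$, $s\ne\pm1$, and $s\ne t^2$ for all $t\in K$. Let $a=\begin{pmatrix}1&0\\0&s\end{pmatrix}$, $b=\begin{pmatrix}0&1\\1&0\end{pmatrix}$ and $V=Ka+Kb\subseteq M_2(K)$. Then: (i) $V$ is a maximal Mathieu subspace of $M_2(K)$; (ii) $V$ contains no nonzero nilpotent element (so it is not of the form $F(\lambda_1e_1+\lambda_2e_2)+e_1M_2e_2$ with $e_1,e_2$ nonzero idempotents summing to $I_2$, nor contained in the trace-zero matrices); (iii) if $L\supseteq K$ is a field containing a square root $\sqrt s$ of $s$, then $U=La+Lb\subseteq M_2(L)$ contains the nonzero idempotent $\frac1{1+s}(a+\sqrt s\,b)$ and hence is not a Mathieu subspace of $M_2(L)$.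
   Context: Let $\mathcal A$ be an associative algebra over a field $F$. An $F$-subspace $M\subseteq\mathcal A$ is a Mathieu subspace (MS) of $\mathcal A$ if for all $a,b,c\in\mathcal A$ such that $a^m\in M$ for all $m\ge 1$, there exists $N$ (depending on $a,b,c$) such that $ba^mc\in M$ for all $m\ge N$. A maximal MS of $\mathcal A$ is a proper MS of $\mathcal A$ that is not properly contained in any proper MS of $\mathcal A$. *)

From HB Require Import structures.
From mathcomp Require Import all_boot all_order all_algebra.
Set Implicit Arguments. Unset Strict Implicit. Unset Printing Implicit Defensive.
Import Order.TTheory GRing.Theory Num.Theory.
Local Open Scope ring_scope.

Definition is_subspace (F : fieldType) (A : lmodType F) (M : A -> Prop) : Prop :=
  M 0 /\ forall (c : F) (x y : A), M x -> M y -> M (c *: x + y).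

Definition mathieu_subspace (F : fieldType) (A : algType F) (M : A -> Prop) : Prop :=
  is_subspace M /\
  forall a b c : A, (forall m : nat, (1 <= m)%N -> M (a ^+ m)) ->
    exists N : nat, forall m : nat, (N <= m)%N -> M (b * a ^+ m * c).

Definition proper_sub (F : fieldType) (A : algType F) (M : A -> Prop) : Prop :=
  exists x : A, ~ M x.

Definition maximal_mathieu_subspace (F : fieldType) (A : algType F) (M : A -> Prop) : Prop :=
  mathieu_subspace M /\ proper_sub M /\
  forall M' : A -> Prop, mathieu_subspace M' -> proper_sub M' ->
    (forall x, M x -> M' x) -> forall x, M' x -> M x.

Definition mxa (K : fieldType) (s : K) : 'M[K]_2 :=
  \matrix_(i < 2, j < 2) (if i == j then (if (i : nat) == 0%N then 1 else s) else 0).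
Definition mxb (K : fieldType) : 'M[K]_2 :=
  \matrix_(i < 2, j < 2) (if i == j then 0 else 1).

Definition span2 (K : fieldType) (a b : 'M[K]_2) (x : 'M[K]_2) : Prop :=
  exists alpha beta : K, x = alpha *: a + beta *: b.

(** Write [x = mx2 α β β (α s)] for the elements of [V = K a + K b].  Since
    [det x = α^2 s - β^2] and [s] is not a square, every nonzero element of
    [V] is invertible; in particular [V] has no nonzero nilpotents.  Comparing
    the diagonal entries of [x^2] shows that [x^2 ∈ V] forces
    [(s - 1) det x = 0], so [x = 0] when [s ≠ 1]: the only [x] whose powers
    all lie in [V] is [0], and [V] is trivially a Mathieu subspace.

    A Mathieu subspace containing an idempotent [e] contains every [y e w];
    a nonzero matrix generates the full matrix algebra as a two-sided ideal,
    so a Mathieu subspace of [M_n(F)] containing a nonzero idempotent is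
    everything.  A subspace strictly larger than [V] contains [V] and some
    [mx2 0 0 p q ≠ 0], hence an idempotent of trace [1] and determinant [0]
    (this is where [s ≠ -1] is used), so [V] is maximal.  Over a field where
    [s = r^2] the same trace/determinant test makes
    [(1 + s)^-1 (a + r b)] an idempotent of [V]. *)

From Pilot Require Import Defs.
From HB Require Import structures.
From mathcomp Require Import all_boot all_order all_algebra.
From mathcomp Require Import ring.
From Stdlib Require Import Classical_Prop.
Set Implicit Arguments. Unset Strict Implicit.
Import GRing.Theory.
Local Open Scope ring_scope.

Lemma ord2_ind (P : 'I_2 -> Prop) : P ord0 -> P ord_max -> forall i, P i.
Proof.
move=> P0 P1 [[|[|//]] lti].
- by rewrite (_ : Ordinal lti = ord0) //; apply: val_inj.
- by rewrite (_ : Ordinal lti = ord_max) //; apply: val_inj.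
Qed.

Ltac mx2_entrywise := apply/matrixP; do 2! elim/ord2_ind; by rewrite !mxE.

Section Matrix2.
Variable R : comNzRingType.

Definition mx2 (a b c d : R) : 'M[R]_2 :=
  \matrix_(i < 2, j < 2) if (i : nat) == 0%N then (if (j : nat) == 0%N then a else b)
                         else (if (j : nat) == 0%N then c else d).

Lemma mx2_eta (M : 'M[R]_2) :
  M = mx2 (M ord0 ord0) (M ord0 ord_max) (M ord_max ord0) (M ord_max ord_max).
Proof. mx2_entrywise. Qed.

Lemma mx2_mul a b c d a' b' c' d' :
  mx2 a b c d * mx2 a' b' c' d' =
  mx2 (a * a' + b * c') (a * b' + b * d') (c * a' + d * c') (c * b' + d * d').
Proof.
apply/matrixP; do 2! elim/ord2_ind;
by rewrite !mxE !big_ord_recl big_ord0 !mxE /= addr0.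
Qed.

Lemma mx2_add a b c d a' b' c' d' :
  mx2 a b c d + mx2 a' b' c' d' = mx2 (a + a') (b + b') (c + c') (d + d').
Proof. mx2_entrywise. Qed.

Lemma mx2_scale k a b c d : k *: mx2 a b c d = mx2 (k * a) (k * b) (k * c) (k * d).
Proof. mx2_entrywise. Qed.

Lemma mx2_0 : mx2 0 0 0 0 = 0.
Proof. mx2_entrywise. Qed.

Lemma mx2_inj a b c d a' b' c' d' : mx2 a b c d = mx2 a' b' c' d' ->
  [/\ a = a', b = b', c = c' & d = d'].
Proof.
move=> E; have Eij i j := congr1 (fun M : 'M[R]_2 => M i j) E.
by move: (Eij ord0 ord0) (Eij ord0 ord_max) (Eij ord_max ord0) (Eij ord_max ord_max);
  rewrite !mxE.
Qed.

Lemma det_mx2 a b c d : \det (mx2 a b c d) = a * d - b * c.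
Proof.
rewrite (expand_det_row _ ord0) !big_ord_recl big_ord0 /cofactor !det_mx11 !mxE /=.
by rewrite /bump /= expr0 expr1 addr0; ring.
Qed.

Lemma tr_mx2 a b c d : \tr (mx2 a b c d) = a + d.
Proof. by rewrite /mxtrace !big_ord_recl big_ord0 !mxE /= addr0. Qed.

(* Cayley-Hamilton: [M^2 = (tr M) M - (det M) 1]. *)
Lemma mx2_idem a b c d : a + d = 1 -> a * d = b * c ->
  mx2 a b c d * mx2 a b c d = mx2 a b c d.
Proof.
move=> tr1 det0; rewrite mx2_mul; congr mx2.
- by rewrite -det0 -mulrDr tr1 mulr1.
- by rewrite [a * b]mulrC -mulrDr tr1 mulr1.
- by rewrite [d * c]mulrC -mulrDr tr1 mulr1.
- by rewrite [c * b]mulrC -det0 -mulrDl tr1 mul1r.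
Qed.

End Matrix2.

Lemma map_mx2 (K L : fieldType) (f : {rmorphism K -> L}) a b c d :
  map_mx f (mx2 a b c d) = mx2 (f a) (f b) (f c) (f d).
Proof. mx2_entrywise. Qed.

Lemma mxaE (K : fieldType) (s : K) : mxa s = mx2 1 0 0 s.
Proof. mx2_entrywise. Qed.

Lemma mxbE (K : fieldType) : mxb K = mx2 0 1 1 0.
Proof. mx2_entrywise. Qed.

Section Subspace.
Variables (F : fieldType) (A : lmodType F) (M : A -> Prop).
Hypothesis subM : is_subspace M.

Lemma subspace_add x y : M x -> M y -> M (x + y).
Proof. by move=> Mx My; rewrite -[x]scale1r; apply: subM.2. Qed.

Lemma subspace_scale c x : M x -> M (c *: x).
Proof. by move=> Mx; rewrite -[c *: x]addr0; apply: subM.2 => //; exact: subM.1. Qed.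

Lemma subspace_sum (I : finType) (G : I -> A) : (forall i, M (G i)) -> M (\sum_i G i).
Proof. by move=> MG; apply: big_ind => //; [exact: subM.1 | exact: subspace_add]. Qed.

End Subspace.

Section Mathieu.
Variables (F : fieldType) (A : algType F).

Lemma mathieu_of_nilpotent_powers (M : A -> Prop) : is_subspace M ->
  (forall a, (forall m, (1 <= m)%N -> M (a ^+ m)) -> exists n, a ^+ n = 0) ->
  mathieu_subspace M.
Proof.
move=> subM nilM; split=> // a b c /nilM [n an0]; exists n => m le_nm.
by rewrite -(subnK le_nm) exprD an0 !mulr0 mul0r; exact: subM.1.
Qed.

Lemma idempotent_exp (e : A) m : e * e = e -> (0 < m)%N -> e ^+ m = e.
Proof. by move=> ee; elim: m => // [[_|m IH _]]; rewrite ?expr1 // exprS IH. Qed.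

Lemma mathieu_idempotent_sandwich (M : A -> Prop) e : mathieu_subspace M ->
  M e -> e * e = e -> forall y w, M (y * e * w).
Proof.
move=> [_ MS] Me ee y w.
have [N HN] := MS e y w (fun m m_gt0 => eq_ind_r M Me (idempotent_exp ee m_gt0)).
by have := HN N.+1 (leqnSn N); rewrite idempotent_exp.
Qed.

End Mathieu.

Lemma delta_mul_mx_delta (R : comNzRingType) n (e : 'M[R]_n) (k i j l : 'I_n) :
  delta_mx k i *m e *m delta_mx j l = e i j *: delta_mx k l.
Proof.
apply/matrixP => a b; rewrite !mxE (bigD1 j) //= big1 => [|c /negbTE ncj]; last first.
  by rewrite !mxE ncj mulr0.
rewrite !mxE eqxx addr0 (bigD1 i) //= big1 => [|d /negbTE ndi]; last first.
  by rewrite !mxE ndi andbF mul0r.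
rewrite !mxE eqxx andbT addr0.
by case: (a == k); case: (b == l); rewrite /= ?mul1r ?mulr1 ?mul0r ?mulr0.
Qed.

Lemma mx_sandwich_eq1 (F : fieldType) n (e : 'M[F]_n.+1) : e != 0 ->
  exists ys ws : 'I_n.+1 -> 'M_n.+1, \sum_k ys k * e * ws k = 1.
Proof.
move=> e_neq0; have /existsP [i /existsP [j eij]] : [exists i, exists j, e i j != 0].
  apply: contraNT e_neq0; rewrite negb_exists => /forallP e0.
  apply/eqP/matrixP => i j; rewrite mxE.
  by move: (e0 i); rewrite negb_exists => /forallP /(_ j) /negPn /eqP.
exists (fun k => (e i j)^-1 *: delta_mx k i), (fun k => delta_mx j k).
under eq_bigr do rewrite -scalerAl -scalerAl -!mulmxE delta_mul_mx_delta.
by rewrite -scaler_sumr -scaler_sumr -mx1_sum_delta scalerA mulVf // scale1r.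
Qed.

Lemma mathieu_mx_idempotent_full (F : fieldType) n (M : 'M[F]_n.+1 -> Prop) e :
  mathieu_subspace M -> M e -> e * e = e -> e != 0 -> forall z, M z.
Proof.
move=> MS Me ee /mx_sandwich_eq1 [ys [ws sum1]] z.
rewrite -[z]mulr1 -sum1 mulr_sumr; apply: (subspace_sum MS.1) => k.
by rewrite !mulrA; apply: mathieu_idempotent_sandwich.
Qed.

Lemma detX (R : comNzRingType) n (x : 'M[R]_n.+1) m : \det (x ^+ m) = \det x ^+ m.
Proof. by elim: m => [|m IH]; rewrite ?det1 // !exprS detM IH. Qed.

Lemma span2_subspace (K : fieldType) (a b : 'M[K]_2) : is_subspace (span2 a b).
Proof.
split; first by exists 0, 0; rewrite !scale0r addr0.
move=> c x y [al [be ->]] [al' [be' ->]].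
exists (c * al + al'), (c * be + be').
by rewrite scalerDr !scalerA !scalerDl addrACA.
Qed.

Section Span.
Variables (K : fieldType) (s : K).
Local Notation V := (span2 (mx2 1 0 0 s) (mx2 0 1 1 0)).

Lemma span2_mx2E x : V x <-> exists al be, x = mx2 al be be (al * s).
Proof.
rewrite /span2; split => [[al [be ->]]|[al [be ->]]]; exists al, be;
  rewrite !mx2_scale mx2_add; congr mx2; ring.
Qed.

Lemma mx2_span_decomp x11 x12 x21 x22 :
  mx2 x11 x12 x21 x22 = (x11 *: mx2 1 0 0 s + x12 *: mx2 0 1 1 0)
                        + mx2 0 0 (x21 - x12) (x22 - x11 * s).
Proof. rewrite !mx2_scale !mx2_add; congr mx2; ring. Qed.

Lemma E22_notin_span : ~ V (mx2 0 0 0 1).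
Proof.
by move=> /span2_mx2E [al [be /mx2_inj [<- _ _ /eqP]]]; rewrite mul0r oner_eq0.
Qed.

Lemma span_ext_idempotent (M : 'M[K]_2 -> Prop) p q : s != -1 ->
  is_subspace M -> (forall x, V x -> M x) -> M (mx2 0 0 p q) -> p != 0 \/ q != 0 ->
  exists e, [/\ M e, e * e = e & e != 0].
Proof.
move=> s_neqN1 subM VM Mpq pq_neq0.
have [q0|q_neq0] := eqVneq q 0; last first.
  exists (mx2 0 0 (q^-1 * p) 1).
  rewrite mx2_idem ?add0r ?mul0r //; split=> //.
    rewrite (_ : mx2 _ _ _ _ = q^-1 *: mx2 0 0 p q); first exact: subspace_scale.
    by rewrite mx2_scale mulr0 (mulVf q_neq0).
  by apply/eqP; rewrite -(mx2_0 K) => /mx2_inj [_ _ _ /eqP]; rewrite oner_eq0.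
have p_neq0 : p != 0 by case: pq_neq0; rewrite ?q0 ?eqxx.
have s1_neq0 : 1 + s != 0 by rewrite addrC addr_eq0.
pose al := (1 + s)^-1.
exists (mx2 al 1 (al ^+ 2 * s) (al * s)); rewrite mx2_idem; first split=> //.
- have Mab : M (al *: mx2 1 0 0 s + 1 *: mx2 0 1 1 0) by apply: VM; exists al, 1.
  rewrite (_ : mx2 _ _ _ _ = ((al ^+ 2 * s - 1) / p) *: mx2 0 0 p q
                             + (al *: mx2 1 0 0 s + 1 *: mx2 0 1 1 0)).
    exact: subM.2.
  rewrite q0 !mx2_scale !mx2_add; congr mx2; rewrite /al;
    by field; rewrite ?p_neq0 ?s1_neq0.
- by apply/eqP; rewrite -(mx2_0 K) => /mx2_inj [_ /eqP]; rewrite oner_eq0.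
- by rewrite -[al in al + _]mulr1 -mulrDr mulVf.
- by rewrite mul1r mulrA -expr2.
Qed.

Lemma span_maximal (M : 'M[K]_2 -> Prop) : s != -1 ->
  mathieu_subspace M -> Defs.proper_sub M -> (forall x, V x -> M x) -> forall x, M x -> V x.
Proof.
move=> s_neqN1 MS [z Mz_false] VM x Mx; apply: NNPP => Vx_false; apply: Mz_false.
move: Mx Vx_false; rewrite (mx2_eta x) mx2_span_decomp.
set p := _ - _; set q := _ - _ => Mx Vx_false.
have Mpq : M (mx2 0 0 p q).
  have Mv : M (x ord0 ord0 *: mx2 1 0 0 s + x ord0 ord_max *: mx2 0 1 1 0).
    by apply: VM; exists (x ord0 ord0), (x ord0 ord_max).
  by have := MS.1.2 (-1) _ _ Mv Mx; rewrite scaleN1r addKr.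
have pq_neq0 : p != 0 \/ q != 0.
  apply: NNPP => /not_or_and [/negP/negPn/eqP p0 /negP/negPn/eqP q0].
  by apply: Vx_false; rewrite p0 q0 mx2_0 addr0; exists (x ord0 ord0), (x ord0 ord_max).
have [e [Me ee e_neq0]] := span_ext_idempotent s_neqN1 MS.1 VM Mpq pq_neq0.
exact: mathieu_mx_idempotent_full MS Me ee e_neq0 z.
Qed.

Lemma span_mathieu_idempotent_eq0 e : mathieu_subspace V -> V e -> e * e = e -> e = 0.
Proof.
move=> MS Ve ee; have [//|e_neq0] := eqVneq e 0.
by case: E22_notin_span; apply: mathieu_mx_idempotent_full MS Ve ee e_neq0 _.
Qed.

Lemma span_sqrt_idempotent r : r ^+ 2 = s -> s != -1 ->
  let e := (1 + s)^-1 *: (mx2 1 0 0 s + r *: mx2 0 1 1 0) in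
  [/\ V e, e * e = e & e != 0].
Proof.
move=> r2 s_neqN1 e; have s1_neq0 : 1 + s != 0 by rewrite addrC addr_eq0.
pose al := (1 + s)^-1.
have Ee : e = mx2 al (al * r) (al * r) (al * s).
  by rewrite /e /al !mx2_scale mx2_add !mx2_scale; congr mx2; ring.
split.
- by exists al, (al * r); rewrite /e scalerDr scalerA.
- rewrite Ee mx2_idem //; last by rewrite mulrACA -[r * r]expr2 r2 mulrA.
  by rewrite -[al in al + _]mulr1 -mulrDr mulVf.
- rewrite Ee; apply/eqP; rewrite -(mx2_0 K) => /mx2_inj [/eqP].
  by rewrite invr_eq0 (negbTE s1_neq0).
Qed.

Section NonSquare.
Hypothesis s_nonsquare : forall t : K, t ^+ 2 != s.

Lemma nonsquare_sqr_eq al be : be ^+ 2 = al ^+ 2 * s -> al = 0 /\ be = 0.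
Proof.
have [-> /eqP|al_neq0 E] := eqVneq al 0.
  by rewrite expr0n mul0r sqrf_eq0 => /eqP.
have := s_nonsquare (be / al).
by rewrite exprMn exprVn E mulrAC mulfV ?expf_neq0 // mul1r eqxx.
Qed.

Lemma span_det_eq0 x : V x -> \det x = 0 -> x = 0.
Proof.
move=> /span2_mx2E [al [be ->]]; rewrite det_mx2 => /subr0_eq E.
have [-> ->] : al = 0 /\ be = 0 by apply: nonsquare_sqr_eq; rewrite !expr2 -E mulrA.
by rewrite mul0r mx2_0.
Qed.

Lemma span_nilpotent_eq0 x n : V x -> x ^+ n = 0 -> x = 0.
Proof.
move=> Vx xn0; apply: span_det_eq0 => //.
have : \det x ^+ n == 0 by rewrite -detX xn0 det0.
by rewrite expf_eq0 => /andP [_ /eqP].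
Qed.

Hypothesis s_neq1 : s != 1.

Lemma span_sqr_eq0 x : V x -> V (x * x) -> x = 0.
Proof.
move=> Vx; case/span2_mx2E: (Vx) => al [be Ex]; rewrite {}Ex in Vx *.
rewrite mx2_mul => /span2_mx2E [al' [be' /mx2_inj [E11 _ _ E22]]].
apply: span_det_eq0 => //; rewrite det_mx2.
have : (1 - s) * (al * (al * s) - be * be) = 0.
  by transitivity ((al * al + be * be) * s - (be * be + al * s * (al * s)));
    [ring | rewrite E11 E22 subrr].
by move/eqP; rewrite mulf_eq0 subr_eq0 eq_sym (negbTE s_neq1) => /eqP.
Qed.

Lemma span_mathieu : mathieu_subspace V.
Proof.
apply: mathieu_of_nilpotent_powers; first exact: span2_subspace.
move=> x Vpow; exists 1%N; rewrite expr1.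
by apply: span_sqr_eq0; [exact: (Vpow 1%N) | rewrite -expr2; exact: Vpow].
Qed.

(* As [e2 e1 = 0], each [e1 y e2] squares to zero, so it vanishes once it lies
   in [V]; writing [1 = \sum_k y_k e1 w_k] then gives [e2 = 0]. *)
Lemma span_neq_peirce_form (e1 e2 : 'M[K]_2) (l1 l2 : K) :
  e1 * e1 = e1 -> e1 != 0 -> e2 != 0 -> e1 + e2 = 1 ->
  ~ (forall x, V x <-> exists c y, x = c *: (l1 *: e1 + l2 *: e2) + e1 * y * e2).
Proof.
move=> e1e1 e1_neq0 /eqP e2_neq0 e12 Vform; apply: e2_neq0.
have e21 : e2 * e1 = 0.
  have -> : e2 = 1 - e1 by rewrite -e12 (addrC e1) addrK.
  by rewrite mulrBl mul1r e1e1 subrr.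
have corner0 y : e1 * y * e2 = 0.
  apply: (@span_nilpotent_eq0 _ 2); first by apply/Vform; exists 0, y; rewrite scale0r add0r.
  by rewrite expr2 -!mulrA (mulrA e2) e21 mul0r !mulr0.
have [ys [ws sum1]] := mx_sandwich_eq1 e1_neq0.
rewrite -[e2]mul1r -sum1 mulr_suml big1 // => k _.
by rewrite -!mulrA (mulrA e1) corner0 mulr0.
Qed.

End NonSquare.

End Span.

Theorem mainTheorem12 (K : fieldType) (s : K)
  (hs0 : s != 0) (hs1 : s != 1) (hsm1 : s != -1)
  (hsq : forall t : K, t ^+ 2 != s) :
  (* (i) *)
  maximal_mathieu_subspace (span2 (mxa s) (mxb K))
  (* (ii) *)
  /\ (forall x : 'M[K]_2, span2 (mxa s) (mxb K) x ->
        (exists n : nat, x ^+ n = 0) -> x = 0)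
  /\ (forall (e1 e2 : 'M[K]_2) (l1 l2 : K),
        e1 * e1 = e1 -> e2 * e2 = e2 -> e1 != 0 -> e2 != 0 -> e1 + e2 = 1 ->
        ~ (forall x : 'M[K]_2, span2 (mxa s) (mxb K) x <->
             exists (c : K) (y : 'M[K]_2), x = c *: (l1 *: e1 + l2 *: e2) + e1 * y * e2))
  /\ (exists x : 'M[K]_2, span2 (mxa s) (mxb K) x /\ \tr x != 0)
  (* (iii) *)
  /\ (forall (L : fieldType) (f : {rmorphism K -> L}) (r : L), r ^+ 2 = f s ->
        let aL := map_mx f (mxa s) in
        let bL := map_mx f (mxb K) in
        let e := (1 + f s)^-1 *: (aL + r *: bL) in
        span2 aL bL e /\ e != 0 /\ e * e = e
        /\ ~ mathieu_subspace (span2 aL bL)).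
Proof.
rewrite mxaE mxbE; split; [|split; [|split; [|split]]].
- split; first exact: span_mathieu.
  split; first by exists (mx2 0 0 0 1); exact: E22_notin_span.
  by move=> M; apply: span_maximal.
- by move=> x Vx [n]; apply: span_nilpotent_eq0.
- by move=> e1 e2 l1 l2 e1e1 _; apply: span_neq_peirce_form.
- exists (mx2 1 0 0 s); split; first by exists 1, 0; rewrite scale1r scale0r addr0.
  by rewrite tr_mx2 addrC addr_eq0.
move=> L f r r2 aL bL e.
have fs_neqN1 : f s != -1 by rewrite -(rmorphN1 f) (inj_eq (fmorph_inj f)).
rewrite /e /aL /bL !map_mx2 rmorph0 rmorph1.
have [Ve ee e_neq0] := span_sqrt_idempotent r2 fs_neqN1.
by do !split=> //; move/span_mathieu_idempotent_eq0/(_ Ve ee)/eqP; rewrite (negbTE e_neq0).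
Qed.
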